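(* Let $(X,(\cdot,\cdot|\cdot))$ be a 2-inner product space over $\mathbb{K}\in\{\mathbb{R},\mathbb{C}\}$, let $n$ be a positive integer, let $z_1,\dots,z_n,z\in X$ and $\mu_1,\dots,\mu_n\in\mathbb{K}$. Define $A_1=\max_{1\le i\le n}|\mu_i|^2\sum_{i=1}^n\|z_i|z\|^2$; $A_2(\alpha)=\big(\sum_{i=1}^n|\mu_i|^{2\alpha}\big)^{1/\alpha}\big(\sum_{i=1}^n\|z_i|z\|^{2\beta}\big)^{1/\beta}$ for $\alpha>1$, $\frac1\alpha+\frac1\beta=1$; $A_3=\sum_{i=1}^n|\mu_i|^2\max_{1\le i\le n}\|z_i|z\|^2$; and $B_1=\max_{1\le i\ne j\le n}|\mu_i\mu_j|\sum_{1\le i\ne j\le n}|(z_i,z_j|z)|$; $B_2(\gamma)=\Big[\big(\sum_{i=1}^n|\mu_i|^{\gamma}\big)^2-\sum_{i=1}^n|\mu_i|^{2\gamma}\Big]^{1/\gamma}\big(\sum_{1\le i\ne j\le n}|(z_i,z_j|z)|^{\delta}\big)^{1/\delta}$ for $\gamma>1$, $\frac1\gamma+\frac1\delta=1$; $B_3=\Big[\big(\sum_{i=1}^n|\mu_i|\big)^2-\sum_{i=1}^n|\mu_i|^2\Big]\max_{1\le i\ne j\le n}|(z_i,z_j|z)|$. Then for every choice of $A\in\{A_1,A_2(\alpha),A_3\}$ and $B\in\{B_1,B_2(\gamma),B_3\}$ (with any admissible $\alpha,\gamma$), \[ \Big\|\sum_{i=1}^n\mu_iz_i\,\Big|\,z\Big\|^2\le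 A+B. \]
   Context: A 2-inner product on a linear space $X$ of dimension greater than $1$ over $\mathbb{K}$ ($\mathbb{K}=\mathbb{R}$ or $\mathbb{C}$) is a function $(\cdot,\cdot|\cdot):X\times X\times X\to\mathbb{K}$ such that for all $x,x',y,z\in X$ and $\alpha\in\mathbb{K}$: (i) $(x,x|z)\ge 0$, and $(x,x|z)=0$ iff $x$ and $z$ are linearly dependent; (ii) $(x,x|z)=(z,z|x)$; (iii) $(y,x|z)=\overline{(x,y|z)}$; (iv) $(\alpha x,y|z)=\alpha(x,y|z)$; (v) $(x+x',y|z)=(x,y|z)+(x',y|z)$. The associated 2-norm is $\|x|z\|=\sqrt{(x,x|z)}$. Sums and maxima indexed by $1\le i\ne j\le n$ run over all ordered pairs $(i,j)$ with $i,j\in\{1,\dots,n\}$, $i\ne j$. *)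

From HB Require Import structures.
From mathcomp Require Import all_boot all_order all_algebra.
From mathcomp Require Import all_classical all_reals.
From mathcomp Require Import exp.
From mathcomp Require Import complex.
Set Implicit Arguments. Unset Strict Implicit. Unset Printing Implicit Defensive.
Import Order.TTheory GRing.Theory Num.Theory.
Local Open Scope ring_scope.

Definition lin_dep (K : numFieldType) (V : lmodType K) (x z : V) : Prop :=
  exists a b : K, (a != 0 \/ b != 0) /\ a *: x + b *: z = 0.

Record is_2ip (K : numFieldType) (conj : K -> K) (V : lmodType K)
    (ip : V -> V -> V -> K) : Prop := {
  ip_dim : exists x y : V, ~ lin_dep x y;
  ip_ge0 : forall x z : V, 0 <= ip x x z;
  ip_eq0 : forall x z : V, ip x x z = 0 <-> lin_dep x z;
  ip_sym : forall x z : V, ip x x z = ip z z x;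
  ip_conj : forall x y z : V, ip y x z = conj (ip x y z);
  ip_scale : forall (a : K) (x y z : V), ip (a *: x) y z = a * ip x y z;
  ip_add : forall x x' y z : V, ip (x + x') y z = ip x y z + ip x' y z }.

Section Quantities.
Variables (R : realType) (K : numFieldType) (modK : K -> R).
Variables (V : lmodType K) (ip : V -> V -> V -> K).
Variables (n : nat) (zs : 'I_n -> V) (z : V) (mu : 'I_n -> K).

(* ||z_i | z||^2 = (z_i, z_i | z), a nonnegative scalar, seen in R *)
Definition nz2 (i : 'I_n) : R := modK (ip (zs i) (zs i) z).
Definition ipa (i j : 'I_n) : R := modK (ip (zs i) (zs j) z).
Definition mua (i : 'I_n) : R := modK (mu i).

Definition A1 : R := (\big[Num.max/0]_(i < n) mua i ^+ 2) * \sum_(i < n) nz2 i.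
Definition A2 (alpha beta : R) : R :=
  (\sum_(i < n) mua i `^ (2 * alpha)) `^ alpha^-1 *
  (\sum_(i < n) nz2 i `^ beta) `^ beta^-1.
Definition A3 : R := (\sum_(i < n) mua i ^+ 2) * \big[Num.max/0]_(i < n) nz2 i.

Definition B1 : R :=
  (\big[Num.max/0]_(i < n) \big[Num.max/0]_(j < n | j != i) modK (mu i * mu j)) *
  \sum_(i < n) \sum_(j < n | j != i) ipa i j.
Definition B2 (gamma delta : R) : R :=
  ((\sum_(i < n) mua i `^ gamma) ^+ 2 - \sum_(i < n) mua i `^ (2 * gamma)) `^ gamma^-1 *
  (\sum_(i < n) \sum_(j < n | j != i) ipa i j `^ delta) `^ delta^-1.
Definition B3 : R :=
  ((\sum_(i < n) mua i) ^+ 2 - \sum_(i < n) mua i ^+ 2) *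
  \big[Num.max/0]_(i < n) \big[Num.max/0]_(j < n | j != i) ipa i j.

Definition lhs : R := modK (ip (\sum_(i < n) mu i *: zs i) (\sum_(i < n) mu i *: zs i) z).
End Quantities.

Definition lemma2p1_stmt (R : realType) (K : numFieldType) (conj : K -> K)
    (modK : K -> R) : Prop :=
  forall (V : lmodType K) (ip : V -> V -> V -> K), is_2ip conj ip ->
  forall (n : nat), (0 < n)%N ->
  forall (zs : 'I_n -> V) (z : V) (mu : 'I_n -> K) (alpha beta gamma delta : R),
    1 < alpha -> alpha^-1 + beta^-1 = 1 ->
    1 < gamma -> gamma^-1 + delta^-1 = 1 ->
    forall A B : R,
      A \in [:: A1 modK ip zs z mu; A2 modK ip zs z mu alpha beta; A3 modK ip zs z mu] ->
      B \in [:: B1 modK ip zs z mu; B2 modK ip zs z mu gamma delta; B3 modK ip zs z mu] ->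
      lhs modK ip zs z mu <= A + B.

From mathcomp Require Import all_boot all_order all_algebra.
From mathcomp Require Import all_classical all_reals.
From mathcomp Require Import exp complex.
From mathcomp Require hoelder.
From mathcomp Require Import lra.
Import Order.TTheory GRing.Theory Num.Theory.
Local Open Scope ring_scope.

(* Sesquilinearity expands ||sum_i mu_i z_i | z||^2 into the sum over all
   pairs (i, j) of mu_i conj(mu_j) (z_i, z_j | z); by the triangle inequality
   it is at most D + O, where D = sum_i |mu_i|^2 ||z_i | z||^2 collects the
   diagonal terms and O = sum_(i <> j) |mu_i| |mu_j| |(z_i, z_j | z)| the
   others.  Each A_k bounds D and each B_k bounds O, by max-times-sum,
   Hoelder's inequality and sum-times-max respectively; for B_2 one also uses
   (sum_i |mu_i|^g)^2 - sum_i |mu_i|^(2g) = sum_(i <> j) (|mu_i| |mu_j|)^g. *)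

Section FiniteHoelder.
Variable R : realType.

Lemma powRVK (r s : R) : r != 0 -> 0 <= s -> (s `^ r^-1) `^ r = s.
Proof. by move=> r0 s0; rewrite -powRrM mulVf // powRr1. Qed.

Lemma conjugate_exponent_gt0 (p q : R) : 1 < p -> p^-1 + q^-1 = 1 -> 0 < q.
Proof.
move=> p1 pq; rewrite -invr_gt0.
have -> : q^-1 = 1 - p^-1 by lra.
by rewrite subr_gt0 invf_lt1 // (lt_trans ltr01).
Qed.

(* Induction on the sums, the two-term case being the library's [hoelder2]. *)
Lemma hoelder_sum (I : finType) (P : pred I) (f g : I -> R) (p q : R) :
  (forall k, 0 <= f k) -> (forall k, 0 <= g k) ->
  0 < p -> 0 < q -> p^-1 + q^-1 = 1 ->
  \sum_(k | P k) f k * g k <=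
  (\sum_(k | P k) f k `^ p) `^ p^-1 * (\sum_(k | P k) g k `^ q) `^ q^-1.
Proof.
move=> f0 g0 p0 q0 pq.
pose invariant s A B := [/\ 0 <= A, 0 <= B & s <= A `^ p^-1 * B `^ q^-1].
suff [] : invariant (\sum_(k | P k) f k * g k)
  (\sum_(k | P k) f k `^ p) (\sum_(k | P k) g k `^ q) by [].
apply: big_rec3 => [|k s A B _ [A0 B0 IH]].
  by split; rewrite // !powR0 ?invr_neq0 ?gt_eqF ?mulr0.
split; rewrite ?addr_ge0 ?powR_ge0 //.
apply: le_trans (lerD (lexx _) IH) _.
rewrite -{2}(powRVK _ _ (lt0r_neq0 p0) A0) -{2}(powRVK _ _ (lt0r_neq0 q0) B0).
by apply: hoelder.hoelder2; rewrite ?powR_ge0.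
Qed.

End FiniteHoelder.

Lemma sqr_sum_sub_sum_sqr (R : pzRingType) (I : finType) (b : I -> R) :
  (\sum_i b i) ^+ 2 - \sum_i b i ^+ 2 = \sum_i \sum_(j | j != i) b i * b j.
Proof.
rewrite expr2 big_distrlr /=.
under eq_bigr => i _ do rewrite (bigD1 i) //= -expr2.
by rewrite big_split /= addrC addrK.
Qed.

Section DiagonalAndOffDiagonal.
Variables (R : realType) (I : finType) (a d : I -> R) (c : I -> I -> R).
Hypotheses (a_ge0 : forall i, 0 <= a i) (d_ge0 : forall i, 0 <= d i)
  (c_ge0 : forall i j, 0 <= c i j).

Let diag := \sum_i a i ^+ 2 * d i.
Let offdiag := \sum_i \sum_(j | j != i) a i * a j * c i j.

Lemma le_bigmax_offdiag (m : I -> I -> R) i j : j != i ->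
  m i j <= \big[Num.max/0]_i \big[Num.max/0]_(j | j != i) m i j.
Proof.
move=> ji; apply: le_trans
  (le_bigmax 0 (fun i => \big[Num.max/0]_(j | j != i) m i j) i).
exact: (le_bigmax_cond 0 (P := fun j => j != i) (fun j => m i j) ji).
Qed.

Lemma diag_le_max_sum : diag <= (\big[Num.max/0]_i a i ^+ 2) * \sum_i d i.
Proof.
rewrite mulr_sumr; apply: ler_sum => i _; rewrite ler_wpM2r //.
exact: (le_bigmax 0 (fun i => a i ^+ 2)).
Qed.

Lemma diag_le_hoelder (alpha beta : R) : 1 < alpha -> alpha^-1 + beta^-1 = 1 ->
  diag <= (\sum_i a i `^ (2 * alpha)) `^ alpha^-1 * (\sum_i d i `^ beta) `^ beta^-1.
Proof.
move=> alpha_gt1 ab.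
under eq_bigr => i _ do rewrite powRrM powR_mulrn //.
apply: hoelder_sum => // [i||].
- exact: sqr_ge0.
- exact: lt_trans ltr01 alpha_gt1.
- exact: conjugate_exponent_gt0 ab.
Qed.

Lemma diag_le_sum_max : diag <= (\sum_i a i ^+ 2) * \big[Num.max/0]_i d i.
Proof.
rewrite mulr_suml; apply: ler_sum => i _; rewrite ler_wpM2l ?sqr_ge0 //.
exact: (le_bigmax 0 d).
Qed.

Lemma offdiag_le_max_sum :
  offdiag <= (\big[Num.max/0]_i \big[Num.max/0]_(j | j != i) (a i * a j)) *
             \sum_i \sum_(j | j != i) c i j.
Proof.
rewrite mulr_sumr; apply: ler_sum => i _.
rewrite mulr_sumr; apply: ler_sum => j ji; rewrite ler_wpM2r //.
exact: (le_bigmax_offdiag (fun i j => a i * a j)).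
Qed.

Lemma offdiag_le_hoelder (gamma delta : R) : 1 < gamma -> gamma^-1 + delta^-1 = 1 ->
  offdiag <= ((\sum_i a i `^ gamma) ^+ 2 - \sum_i a i `^ (2 * gamma)) `^ gamma^-1 *
             (\sum_i \sum_(j | j != i) c i j `^ delta) `^ delta^-1.
Proof.
move=> gamma_gt1 gd.
under [X in _ - X]eq_bigr => i _ do rewrite mulrC powRrM powR_mulrn ?powR_ge0 //.
rewrite sqr_sum_sub_sum_sqr /offdiag.
rewrite !(pair_big_dep xpredT (fun i j => j != i)) /=.
under [X in X `^ gamma^-1 * _]eq_bigr => k _ do rewrite -powRM //.
apply: (@hoelder_sum R _ (fun k => k.2 != k.1)
  (fun k => a k.1 * a k.2) (fun k => c k.1 k.2)) => //.
- by move=> k; rewrite mulr_ge0.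
- exact: lt_trans ltr01 gamma_gt1.
- exact: conjugate_exponent_gt0 gd.
Qed.

Lemma offdiag_le_sum_max :
  offdiag <= ((\sum_i a i) ^+ 2 - \sum_i a i ^+ 2) *
             \big[Num.max/0]_i \big[Num.max/0]_(j | j != i) c i j.
Proof.
rewrite sqr_sum_sub_sum_sqr mulr_suml; apply: ler_sum => i _.
rewrite mulr_suml; apply: ler_sum => j ji; rewrite ler_wpM2l ?mulr_ge0 //.
exact: le_bigmax_offdiag.
Qed.

End DiagonalAndOffDiagonal.

Section TwoInnerProduct.
Context {K : numFieldType} {conj : K -> K}.
Hypotheses (conjD : {morph conj : x y / x + y}) (conjM : {morph conj : x y / x * y}).

Lemma conj0 : conj 0 = 0.
Proof. by apply: (@addrI _ (conj 0)); rewrite -conjD !addr0. Qed.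

Context {V : lmodType K} {ip : V -> V -> V -> K}.
Hypothesis ipH : is_2ip conj ip.

Lemma ip0l y z : ip 0 y z = 0.
Proof. by rewrite -(scale0r 0) (ip_scale ipH) mul0r. Qed.

Lemma ip_suml (I : finType) (x : I -> V) y z :
  ip (\sum_i x i) y z = \sum_i ip (x i) y z.
Proof.
exact: (big_morph (fun x => ip x y z) (fun x x' => ip_add ipH x x' y z) (ip0l y z)).
Qed.

Lemma ip_sumr (I : finType) x (y : I -> V) z :
  ip x (\sum_i y i) z = \sum_i ip x (y i) z.
Proof.
rewrite (ip_conj ipH) ip_suml (big_morph conj conjD conj0).
by apply: eq_bigr => i _; rewrite -(ip_conj ipH).
Qed.

Lemma ip_scaler a x y z : ip x (a *: y) z = conj a * ip x y z.
Proof. by rewrite (ip_conj ipH) (ip_scale ipH) conjM -(ip_conj ipH). Qed.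

Lemma ip_lin_comb (I : finType) (mu : I -> K) (x : I -> V) z :
  ip (\sum_i mu i *: x i) (\sum_j mu j *: x j) z =
  \sum_i \sum_j mu i * conj (mu j) * ip (x i) (x j) z.
Proof.
rewrite ip_suml; apply: eq_bigr => i _.
rewrite (ip_scale ipH) ip_sumr mulr_sumr; apply: eq_bigr => j _.
by rewrite ip_scaler mulrA.
Qed.

End TwoInnerProduct.

Section Modulus.
Variables (R : realType) (K : numFieldType) (conj : K -> K) (modK : K -> R).
Hypotheses (conjD : {morph conj : x y / x + y}) (conjM : {morph conj : x y / x * y}).
Hypotheses (modK0 : modK 0 = 0) (modKD : forall x y, modK (x + y) <= modK x + modK y)
  (modKM : {morph modK : x y / x * y}) (modKJ : forall x, modK (conj x) = modK x)
  (modK_ge0 : forall x, 0 <= modK x).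

Lemma modK_sum (I : finType) (F : I -> K) : modK (\sum_i F i) <= \sum_i modK (F i).
Proof.
elim/big_rec2: _ => [|i y1 y2 _ IH]; first by rewrite modK0.
by apply: le_trans (modKD _ _) _; rewrite lerD2l.
Qed.

Lemma lhs_le_diag_add_offdiag {V : lmodType K} {ip : V -> V -> V -> K}
    (ipH : is_2ip conj ip) n (zs : 'I_n -> V) z mu :
  lhs modK ip zs z mu <=
  \sum_i mua modK mu i ^+ 2 * nz2 modK ip zs z i +
  \sum_i \sum_(j | j != i) mua modK mu i * mua modK mu j * ipa modK ip zs z i j.
Proof.
rewrite /lhs (ip_lin_comb conjD conjM ipH); apply: le_trans (modK_sum _ _) _.
rewrite -big_split /=; apply: ler_sum => i _.
apply: le_trans (modK_sum _ _) _; rewrite (bigD1 i) //= lerD //.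
  by rewrite !modKM modKJ expr2.
by apply: ler_sum => j _; rewrite !modKM modKJ.
Qed.

Theorem lemma2p1_generic : lemma2p1_stmt conj modK.
Proof.
move=> V ip ipH n _ zs z mu alpha beta gamma delta alpha_gt1 ab gamma_gt1 gd A B HA HB.
apply: le_trans (lhs_le_diag_add_offdiag ipH _ zs z mu) _.
apply: lerD.
  move: HA; rewrite !inE => /or3P [] /eqP ->.
  - by apply: diag_le_max_sum => i; apply: modK_ge0.
  - by apply: diag_le_hoelder => // i; apply: modK_ge0.
  - by apply: diag_le_sum_max => i; apply: modK_ge0.
move: HB; rewrite !inE => /or3P [] /eqP ->.
- rewrite /B1.
  under [X in X * _]eq_bigr => i _ do under eq_bigr => j _ do rewrite modKM.
  by apply: offdiag_le_max_sum => i *; apply: modK_ge0.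
- by apply: offdiag_le_hoelder => // i *; apply: modK_ge0.
- by apply: offdiag_le_sum_max => i *; apply: modK_ge0.
Qed.

End Modulus.

Theorem lemma2p1 (R : realType) :
  lemma2p1_stmt (fun x : R => x) (fun x : R => `|x|) /\
  lemma2p1_stmt (@Num.conj (R[i])) (@Normc.normc R).
Proof.
split; apply: lemma2p1_generic => //.
- exact: normr0.
- exact: ler_normD.
- exact: normrM.
- exact: rmorphD.
- exact: rmorphM.
- exact: Normc.normc0.
- exact: le_normcD.
- exact: Normc.normcM.
- by case=> a b; rewrite /Normc.normc /= sqrrN.
- by case=> a b; apply: sqrtr_ge0.
Qed.
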